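(* Let $n \geq 2$ and $2 \leq k \leq n$. Then the lower convex envelope of $Q_k$ on the nonnegative orthant $\mathbb{R}_+^n$ is identically $0$, and $Q_k$ has no lower convex envelope on $\mathbb{R}^n$, i.e. there is no convex function $f : \mathbb{R}^n \to \mathbb{R}$ with $f \leq Q_k$ on $\mathbb{R}^n$.
   Context: For $x \in \mathbb{R}^n$ and an integer $1 \leq k \leq n$, $Q_k(x)$ denotes the $k$-th largest entry of $x$ (entries counted with multiplicity). The lower convex envelope of a function $g$ on a convex set $D$ is the pointwise supremum of all convex functions $h : D \to \mathbb{R}$ satisfying $h \leq g$ on $D$ (i.e. the largest convex function below $g$ on $D$). *)

From HB Require Import structures.
From mathcomp Require Import all_boot all_order all_algebra.
From mathcomp Require Import reals.
Set Implicit Arguments. Unset Strict Implicit. Unset Printing Implicit Defensive.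
Import Order.TTheory GRing.Theory Num.Theory.
Local Open Scope ring_scope.

(* Q_k(x): the k-th largest entry of x (k counted from 1, with multiplicity):
   sort the entries in nonincreasing order and take the entry at index k-1. *)
Definition Qk (R : realType) (n k : nat) (x : 'rV[R]_n) : R :=
  nth 0 (sort (fun a b : R => b <= a) [seq x ord0 i | i <- enum 'I_n]) k.-1.

Definition orthant (R : realType) (n : nat) (x : 'rV[R]_n) : Prop :=
  forall i, 0 <= x ord0 i.

Definition convex_on (R : realType) (n : nat) (D : 'rV[R]_n -> Prop)
  (h : 'rV[R]_n -> R) : Prop :=
  forall x y, D x -> D y -> forall t : R, 0 <= t -> t <= 1 ->
    h (t *: x + (1 - t) *: y) <= t * h x + (1 - t) * h y.

Definition convex_minorant (R : realType) (n : nat) (D : 'rV[R]_n -> Prop)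
  (g h : 'rV[R]_n -> R) : Prop :=
  convex_on D h /\ forall x, D x -> h x <= g x.

Definition lce_value (R : realType) (n : nat) (D : 'rV[R]_n -> Prop)
  (g : 'rV[R]_n -> R) (x : 'rV[R]_n) (v : R) : Prop :=
  (forall h, convex_minorant D g h -> h x <= v) /\
  (forall u, (forall h, convex_minorant D g h -> h x <= u) -> v <= u).

(* A convex function that is <= b along every ray a + R_+ e_i is <= b on all of
   a + R_+^n, since every point of the translated orthant is reached by
   repeated midpoints of such ray points.  On the ray a + R_+ e_i with
   a = b(1, ..., 1), at most one entry exceeds b, so Q_k <= b there as k >= 2.
   With b = 0 this gives h <= 0 on R_+^n for every convex minorant h of Q_k,
   while Q_k >= 0 there.  On R^n, taking b = -(|f 0| + 1) forces f 0 <= b for a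
   convex minorant f, which is absurd. *)
From HB Require Import structures.
From mathcomp Require Import all_boot all_order all_algebra.
From mathcomp Require Import reals.
From mathcomp Require Import lra zify.

Set Implicit Arguments.
Unset Strict Implicit.
Unset Printing Implicit Defensive.
Import Order.TTheory GRing.Theory Num.Theory.
Local Open Scope ring_scope.

Lemma count_gt_nth_sorted (R : realDomainType) (s : seq R) (b : R) (k : nat) :
  sorted (fun x y => y <= x) s -> (k < size s)%N -> b < nth 0 s k ->
  (k < count (fun a => (b < a)%R) s)%N.
Proof.
move=> s_sorted k_lt b_lt.
have nth_ge i : (i <= k)%N -> nth 0 s k <= nth 0 s i.
  move=> ik; apply: (sorted_leq_nth (leT := fun x y => y <= x)) => //.
  - by move=> x y z /= yx zy; apply: le_trans zy yx.
  - by rewrite inE; apply: leq_ltn_trans k_lt.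
have take_gt : all (fun a => b < a) (take k.+1 s).
  apply/(all_nthP 0) => i; rewrite (size_takel k_lt) => ik.
  by rewrite nth_take //; apply: lt_le_trans b_lt (nth_ge _ _).
rewrite -(cat_take_drop k.+1 s) count_cat.
move: take_gt; rewrite all_count => /eqP ->; rewrite (size_takel k_lt).
exact: leq_addr.
Qed.

Lemma Qk_le_of_count_lt (R : realType) (n k : nat) (x : 'rV[R]_n) (b : R) :
  (k <= n)%N -> (count (fun a => (b < a)%R) [seq x ord0 i | i <- enum 'I_n] < k)%N ->
  Qk k x <= b.
Proof.
rewrite /Qk => kn count_lt; rewrite leNgt; apply/negP => b_lt.
set s := [seq x ord0 i | i <- enum 'I_n] in count_lt b_lt.
have sizeE : size (sort (fun a b : R => b <= a) s) = n.
  by rewrite size_sort size_map size_enum_ord.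
have := count_gt_nth_sorted (sort_sorted (fun x y => le_total y x) s) _ b_lt.
rewrite sizeE count_sort => /(_ ltac:(lia)) count_ge.
by have := leq_ltn_trans count_ge count_lt; lia.
Qed.

Lemma Qk_le_of_others_le (R : realType) (n k : nat) (x : 'rV[R]_n) (i : 'I_n) (b : R) :
  (2 <= k)%N -> (k <= n)%N -> (forall j, j != i -> x ord0 j <= b) -> Qk k x <= b.
Proof.
move=> k2 kn others_le; apply: Qk_le_of_count_lt => //.
rewrite count_map; apply: (@leq_trans (count (pred1 i) (enum 'I_n)).+1) => //.
  rewrite ltnS; apply: sub_count => j /=.
  by case: eqP => // /eqP /others_le; rewrite ltNge => ->.
by rewrite (count_uniq_mem _ (enum_uniq _)) mem_enum.
Qed.

Lemma Qk_add_scale_delta_le (R : realType) (n k : nat) (a : 'rV[R]_n) (b c : R)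
    (i : 'I_n) :
  (2 <= k)%N -> (k <= n)%N -> (forall j, a ord0 j <= b) ->
  Qk k (a + c *: delta_mx 0 i) <= b.
Proof.
move=> k2 kn a_le; apply: (Qk_le_of_others_le (i := i)) => // j /negPf j_ne.
by rewrite !mxE j_ne mulr0 addr0.
Qed.

Lemma Qk_ge0 (R : realType) (n k : nat) (x : 'rV[R]_n) : orthant x -> 0 <= Qk k x.
Proof.
move=> x_ge0; rewrite /Qk; set s := sort _ _.
case: (ltnP k.-1 (size s)) => [k_lt|k_ge]; last by rewrite nth_default.
have /mapP [j _ ->] : nth 0 s k.-1 \in [seq x ord0 i | i <- enum 'I_n].
  by rewrite -(mem_sort (fun a b : R => b <= a)) mem_nth.
exact: x_ge0.
Qed.

Lemma convex_on_comb_le (R : realType) (n : nat) (D : 'rV[R]_n -> Prop)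
    (h : 'rV[R]_n -> R) (x y : 'rV[R]_n) (t b : R) :
  convex_on D h -> D x -> D y -> 0 <= t -> t <= 1 -> h x <= b -> h y <= b ->
  h (t *: x + (1 - t) *: y) <= b.
Proof.
move=> h_cvx Dx Dy t_ge0 t_le1 hx hy; apply: le_trans (h_cvx _ _ Dx Dy _ t_ge0 t_le1) _.
have := ler_wpM2l t_ge0 hx; have := ler_wpM2l (ltac:(lra) : 0 <= 1 - t) hy.
lra.
Qed.

Lemma orthant_scale_delta (R : realType) (n : nat) (i : 'I_n) (c : R) :
  0 <= c -> orthant (c *: delta_mx 0 i).
Proof. by move=> c_ge0 j; rewrite !mxE mulr_ge0. Qed.

Lemma convex_le_on_translated_orthant (R : realType) (n : nat) (D : 'rV[R]_n -> Prop)
    (h : 'rV[R]_n -> R) (a : 'rV[R]_n) (b : R) :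
  (0 < n)%N -> convex_on D h -> (forall y, orthant y -> D (a + y)) ->
  (forall (i : 'I_n) (c : R), 0 <= c -> h (a + c *: delta_mx 0 i) <= b) ->
  forall y, orthant y -> h (a + y) <= b.
Proof.
move=> n_gt0 h_cvx D_orth ray_le.
suff supp_le m y : orthant y -> (forall j : 'I_n, (m <= j)%N -> y ord0 j = 0) ->
    h (a + y) <= b.
  by move=> y y_ge0; apply: (supp_le n) => // j; rewrite leqNgt ltn_ord.
elim: m y => [|m IHm] y y_ge0 y_supp.
  have -> : y = 0 *: delta_mx 0 (Ordinal n_gt0).
    by apply/rowP => j; rewrite scale0r mxE y_supp.
  exact: ray_le.
case: (ltnP m n) => [m_lt|n_le]; last first.
  by apply: IHm => // j mj; apply: y_supp; have := ltn_ord j; lia.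
pose i := Ordinal m_lt.
pose y' := y - y ord0 i *: delta_mx 0 i.
have y'E j : y' ord0 j = if j == i then 0 else y ord0 j.
  by rewrite !mxE eqxx /=; case: eqP => [->|_]; rewrite ?mulr1 ?subrr ?mulr0 ?subr0.
have y'_ge0 : orthant (2 *: y').
  by move=> j; rewrite mxE y'E; case: eqP => _; rewrite ?mulr0 // mulr_ge0.
have yi_ge0 : 0 <= 2 * y ord0 i by rewrite mulr_ge0.
have -> : a + y = (1 / 2) *: (a + 2 *: y') + (1 - 1 / 2) *: (a + (2 * y ord0 i) *: delta_mx 0 i).
  apply/rowP => j; rewrite !mxE eqxx /=.
  by case: eqP => _; rewrite ?mulr1 ?mulr0; lra.
apply: (convex_on_comb_le (D := D)) => //; try lra.
- exact: D_orth y'_ge0.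
- exact/D_orth/orthant_scale_delta.
- apply: IHm => // j mj; rewrite mxE y'E.
  case: eqP => [_|/eqP j_ne]; first by rewrite mulr0.
  rewrite y_supp ?mulr0 //.
  have : nat_of_ord j != m by apply: contra j_ne => /eqP j_m; apply/eqP/val_inj.
  by lia.
- exact: ray_le.
Qed.

Theorem theorem2 (R : realType) (n k : nat) (hn : (2 <= n)%N)
  (hk2 : (2 <= k)%N) (hkn : (k <= n)%N) :
  (forall x : 'rV[R]_n, orthant x -> lce_value (@orthant R n) (Qk k) x 0) /\
  ~ (exists f : 'rV[R]_n -> R,
       convex_on (fun _ => True) f /\ forall x, f x <= Qk k x).
Proof.
have n_gt0 : (0 < n)%N by lia.
split.
- move=> x x_ge0; split.
  + move=> h [h_cvx h_le]; rewrite -[x]add0r.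
    apply: (convex_le_on_translated_orthant n_gt0 h_cvx) => // [y|i c c_ge0].
      by rewrite add0r.
    apply: le_trans (h_le _ _) _; first by rewrite add0r; apply: orthant_scale_delta.
    by apply: (Qk_add_scale_delta_le (a := 0)) => // j; rewrite mxE.
  + move=> u u_ub; apply: (u_ub (fun=> 0)); split; last by move=> y; apply: Qk_ge0.
    by move=> ? ? _ _ t _ _; rewrite !mulr0 addr0.
- case=> f [f_cvx f_le].
  pose M := `|f 0| + 1.
  have M_ge0 : orthant (const_mx M : 'rV[R]_n).
    by move=> j; rewrite mxE /M; have := normr_ge0 (f 0); lra.
  have f0_le : f (const_mx (- M) + const_mx M) <= - M.
    apply: (convex_le_on_translated_orthant n_gt0 f_cvx) => // i c _.
    apply: le_trans (f_le _) _.
    by apply: (Qk_add_scale_delta_le (a := const_mx (- M))) => // j; rewrite mxE.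
  have zeroE : const_mx (- M) + const_mx M = 0 :> 'rV[R]_n.
    by apply/rowP => j; rewrite !mxE addNr.
  by move: f0_le; rewrite zeroE; have := ler_norm (- f 0); rewrite normrN /M; lra.
Qed.
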